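(* Fix a sequence of matchings and any non-negative load vector $x^{(t_1)}$ at the end of round $t_1$, and let $\mathcal{T}$ be the set of all tokens. Let $D\subseteq V$ and $t_2 > t_1$. Then the random variable $Z:= \sum_{i \in \mathcal{T}} \mathbf{1}_{w_i^{(t_2)} \in D} = \sum_{u \in D} x_u^{(t_2)}$ satisfies, for any $\delta > 0$, \[ \Pr[ Z \geq (1+\delta) \mathbb{E}[Z] ] \leq \left( \frac{\mathrm{e}^{\delta}}{(1+\delta)^{1+\delta}} \right)^{\mathbb{E}[Z]}. \]
   Context: Token-based description of the discrete load balancing protocol on a graph $G=(V,E)$ with matchings $\mathbf{M}^{(t)}\subseteq E$ used in round $t$: tokens are distinguishable; $w^{(t)}_i$ is the node holding token $i$ at the end of round $t$, $x^{(t)}_u$ the number of tokens at $u$. If $u,v$ are matched in round $t$, all tokens at $u$ and $v$ are put in an urn; with probability $1/2$ node $u$ draws $\lceil (x^{(t-1)}_u+x^{(t-1)}_v)/2\rceil$ tokens uniformly at random without replacement, otherwise $\lfloor (x^{(t-1)}_u+x^{(t-1)}_v)/2\rfloor$ (independently over matched edges and rounds); $v$ gets the rest. Unmatched nodes keep their tokens. *)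

From HB Require Import structures.
From mathcomp Require Import all_boot all_order all_algebra.
From mathcomp Require Import reals sequences exp.
Set Implicit Arguments. Unset Strict Implicit. Unset Printing Implicit Defensive.
Import Order.TTheory GRing.Theory Num.Theory.
Local Open Scope ring_scope.

Section Defs.
Variables (R : realType) (V Tok : finType).

(* A matching is given by its "mate" function: mate u = u iff u is unmatched,
   otherwise {u, mate u} is a matched edge of the graph e. *)
Definition is_matching (e : rel V) (mate : V -> V) : Prop :=
  forall u, mate (mate u) = u /\ (mate u != u -> e u (mate u)).

(* Probability that, in the matched edge {u, mate u}, node u ends up holding
   exactly the set of tokens { i | w i in {u,v} and w' i = u } (state w -> w'). *)
Definition edge_prob (mate : V -> V) (w w' : {ffun Tok -> V}) (u : V) : R :=
  let v := mate u in
  let x := #|[set i | (w i == u) || (w i == v)]| in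
  let k := #|[set i | ((w i == u) || (w i == v)) && (w' i == u)]| in
  ((2%:R)^-1 * (k == uphalf x)%:R + (2%:R)^-1 * (k == x./2)%:R) / ('C(x, k))%:R.

(* Unmatched nodes keep their tokens; tokens of a matched edge {u,v} are
   redistributed between u and v; edges are independent. Each matched edge is
   counted once (from its endpoint with smaller enum_rank). *)
Definition step (mate : V -> V) (w w' : {ffun Tok -> V}) : R :=
  if [forall i, if mate (w i) == w i then w' i == w i
                else (w' i == w i) || (w' i == mate (w i))]
  then \prod_(u | (enum_rank u < enum_rank (mate u))%N) edge_prob mate w w' u
  else 0.

(* Distribution of the token positions after k rounds following round t1,
   starting from the deterministic configuration w0 at the end of round t1;
   round t uses matching M t. *)
Fixpoint dist (M : nat -> V -> V) (t1 : nat) (w0 : {ffun Tok -> V}) (k : nat)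
  : {ffun Tok -> V} -> R :=
  match k with
  | 0 => fun w => (w == w0)%:R
  | k'.+1 => fun w' => \sum_w dist M t1 w0 k' w * step (M (t1 + k'.+1)%N) w w'
  end.

Definition Zcount (D : {set V}) (w : {ffun Tok -> V}) : nat :=
  #|[set i | w i \in D]|.

Definition expectZ (M : nat -> V -> V) t1 w0 k (D : {set V}) : R :=
  \sum_w dist M t1 w0 k w * (Zcount D w)%:R.

Definition probZge (M : nat -> V -> V) t1 w0 k (D : {set V}) (a : R) : R :=
  \sum_(w | a <= (Zcount D w)%:R) dist M t1 w0 k w.

End Defs.

From HB Require Import structures.
From mathcomp Require Import all_boot all_order all_algebra.
From mathcomp Require Import reals sequences exp.
From mathcomp Require Import ring lra.
Import Order.TTheory GRing.Theory Num.Theory.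
Local Open Scope ring_scope.
Set Implicit Arguments. Unset Strict Implicit. Unset Printing Implicit Defensive.

(* Negative association in product form: for every nonnegative [f],
   E[prod_i f (w_i)] <= prod_i E[f (position of a single random walk from w_i)],
   where the single walk jumps to its mate with probability 1/2 in each round.
   Given the configuration, the matched edges of a round act independently, so it
   suffices to look at one edge {u, v} holding x tokens: u receives ceil(x/2) or
   floor(x/2) of them, each with probability 1/2, and
   (a^ceil b^floor + a^floor b^ceil) / 2 <= ((a + b) / 2)^x  by AM-GM.
   Taking f = exp (ln (1 + delta) 1_D), the usual Chernoff argument (Markov's
   inequality plus 1 + y <= e^y) finishes, since the same computation with sums
   instead of products gives E[Z] = sum_i P[the walk from w_i ends in D]. *)

Lemma uphalf_add_half n : (uphalf n + n./2)%N = n.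
Proof. by rewrite uphalf_half -addnA addnn odd_double_half. Qed.

Lemma mid_id (F : numFieldType) (a : F) : (a + a) / 2 = a.
Proof. by field. Qed.

Lemma sum_ord_indicator (R : pzSemiRingType) (F : nat -> R) n c : (c <= n)%N ->
  \sum_(k < n.+1) (k == c :> nat)%:R * F k = F c.
Proof.
move=> le_cn; rewrite (bigD1 (Ordinal (le_cn : c < n.+1)%N)) //= eqxx mul1r.
rewrite big1 ?addr0 // => k ne_kc; rewrite (_ : (k == c :> nat) = false) ?mul0r //.
by apply/negbTE; apply: contra ne_kc => /eqP eq_kc; apply/eqP/val_inj.
Qed.

Lemma sum_subsets_card (R : nmodType) (T : finType) (A : {set T}) (H : nat -> R) :
  \sum_(B : {set T} | B \subset A) H #|B| = \sum_(k < #|A|.+1) H k *+ 'C(#|A|, k).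
Proof.
rewrite (partition_big (fun B : {set T} => inord #|B| : 'I_#|A|.+1) predT) //=.
apply: eq_bigr => k _.
rewrite (eq_bigl (fun B : {set T} => (B \subset A) && (#|B| == k))); last first.
  move=> B; case: (boolP (B \subset A)) => //= sBA.
  by rewrite -(inj_eq val_inj) /= inordK // ltnS subset_leq_card.
rewrite (eq_bigr (fun _ => H k)) => [|B /andP[_ /eqP -> //]].
by rewrite sumr_const -cards_draws cardsE.
Qed.

Lemma mid_split_powers_le (F : realFieldType) (a b : F) x : 0 <= a -> 0 <= b ->
  (a ^+ uphalf x * b ^+ (x - uphalf x) + a ^+ x./2 * b ^+ (x - x./2)) / 2
    <= ((a + b) / 2) ^+ x.
Proof.
move=> a_ge0 b_ge0; set s := (a + b) / 2.
suff mid_le o h : (o <= 1)%N ->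
    (a ^+ (o + h) * b ^+ h + a ^+ h * b ^+ (o + h)) / 2 <= s ^+ (o + h + h).
  have def_x : (odd x + x./2 + x./2 = x)%N by rewrite -addnA addnn odd_double_half.
  have := mid_le (odd x) x./2 (leq_b1 _); rewrite def_x uphalf_half.
  have -> : (x - (odd x + x./2) = x./2)%N by rewrite -[X in (X - _)%N]def_x addKn.
  by have -> : (x - x./2 = odd x + x./2)%N by rewrite -[X in (X - _)%N]def_x addnK.
move=> le_o1; have AGM : (a * b) ^+ h <= (s ^+ 2) ^+ h.
  have s_ge0 : 0 <= s by rewrite divr_ge0 ?addr_ge0.
  rewrite lerXn2r ?nnegrE ?(exprn_ge0 2 s_ge0) ?mulr_ge0 //; exact: (leif_AGM2 a b).1.
have -> : s ^+ (o + h + h) = s ^+ o * (s ^+ 2) ^+ h.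
  by rewrite -exprM -exprD mul2n -addnn addnA.
case: o le_o1 => [|[|//]] _.
  by rewrite !add0n expr0 mul1r mid_id -exprMn.
have -> : (a ^+ (1 + h) * b ^+ h + a ^+ h * b ^+ (1 + h)) / 2 = s * (a * b) ^+ h.
  by rewrite !exprD !expr1 exprMn /s; field.
by rewrite expr1 ler_wpM2l // divr_ge0 ?addr_ge0.
Qed.

Lemma mid_split_sums (F : fieldType) (a b : F) x :
  (a *+ uphalf x + b *+ (x - uphalf x) + (a *+ x./2 + b *+ (x - x./2))) / 2
    = (a + b) / 2 *+ x.
Proof.
move: (uphalf x) (x./2) (uphalf_add_half x) => c d <-.
rewrite addKn addnK -mulrnAl.
congr (_ / _); rewrite !mulrnDr !mulrnDl.
by rewrite addrACA [RHS]addrACA [b *+ d + _]addrC.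
Qed.

Definition mate_avg (F : fieldType) (V : Type) (m : V -> V) (f : V -> F) (u : V) : F :=
  (f u + f (m u)) / 2.

Section OneRound.
Variables (R : realType) (V Tok : finType) (m : V -> V).
Hypothesis mK : involutive m.
Variable w : {ffun Tok -> V}.
Local Notation conf := {ffun Tok -> V}.

(* Each matched edge is indexed by its endpoint of smaller [enum_rank], as in
   [step]; an unmatched node is its own (non-leading) index. *)
Definition leads (u : V) := (enum_rank u < enum_rank (m u))%N.
Definition leader (u : V) := if leads u then u else m u.
Definition edge_of (i : Tok) := leader (w i).
Definition near (i : Tok) (v : V) := (v == w i) || (v == m (w i)).
Definition admissible (w' : conf) := [forall i, near i (w' i)].
Definition moves_on (r : V) (w' : conf) :=
  [forall i, if edge_of i == r then near i (w' i) else w' i == w i].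
(* [edge_tokens r] and [sent r w'] are the [x] and [k] of [edge_prob]. *)
Definition edge_tokens (r : V) := [set i | (w i == r) || (w i == m r)].
Definition sent (r : V) (w' : conf) :=
  #|[set i | ((w i == r) || (w i == m r)) && (w' i == r)]|.
Definition edge_weight (r : V) (w' : conf) : R :=
  if leads r then edge_prob R m w w' r else 1.

Lemma leads_mate_neq r : leads r -> m r != r.
Proof. by rewrite /leads; apply: contraTneq => ->; rewrite ltnn. Qed.

Lemma edge_ofE i r : leads r -> (edge_of i == r) = (i \in edge_tokens r).
Proof.
move=> lr; rewrite inE /edge_of /leader.
case: (boolP (leads (w i))) => lwi; apply/idP/idP.
- by move=> ->.
- case/orP=> /eqP wir //; move: lwi lr; rewrite wir /leads mK.
  by move=> lt1 /ltnW; rewrite leqNgt lt1.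
- by move/eqP=> <-; rewrite mK eqxx orbT.
- by case/orP=> /eqP wir; [rewrite wir lr in lwi | rewrite wir mK].
Qed.

Lemma mate_fixed i : ~~ leads (edge_of i) -> m (w i) = w i.
Proof.
rewrite /edge_of /leader; case: (boolP (leads (w i))) => [-> //|].
rewrite /leads mK => ge1 ge2; apply: enum_rank_inj; apply: val_inj; apply/eqP.
by rewrite eqn_leq; apply/andP; split; rewrite leqNgt.
Qed.

Lemma moves_on_mate r w' i : leads r -> moves_on r w' -> edge_of i == r ->
  w' i != r -> w' i = m r.
Proof.
move=> lr /forallP/(_ i) w'i ir; rewrite ir /near in w'i.
move: ir; rewrite edge_ofE // inE.
by case/orP=> /eqP wi; move: w'i; rewrite wi ?mK => /orP[] /eqP -> //; rewrite eqxx.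
Qed.

Lemma sum_admissible_prod (F : V -> conf -> R) :
  (forall r (w1 w2 : conf), (forall i, edge_of i = r -> w1 i = w2 i) ->
     F r w1 = F r w2) ->
  \sum_(w' | admissible w') \prod_r F r w' = \prod_r \sum_(w' | moves_on r w') F r w'.
Proof.
move=> F_local; rewrite bigA_distr_big_dep /=.
pose glue (g : {ffun V -> conf}) : conf := [ffun i => g (edge_of i) i].
pose cut (w' : conf) : {ffun V -> conf} :=
  [ffun r => [ffun i => if edge_of i == r then w' i else w i]].
have cutK g : g \in family moves_on -> cut (glue g) = g.
  move=> /familyP g_on; apply/ffunP => r; apply/ffunP => i; rewrite !ffunE.
  case: eqP => [<- // | ne_ir].
  by have /forallP/(_ i) := g_on r; case: eqP => // _ /eqP.
rewrite (reindex_onto cut glue cutK); apply: eq_big => [w' | w' _].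
  have -> : glue (cut w') == w' by apply/eqP/ffunP => i; rewrite !ffunE eqxx.
  rewrite andbT; apply/forallP/familyP => [w'_near r | cut_on i].
    by apply/forallP => i; rewrite !ffunE; case: (edge_of i == r) => //; apply: w'_near.
  by have /forallP/(_ i) := cut_on (edge_of i); rewrite !ffunE eqxx.
by apply: eq_bigr => r _; apply: F_local => i ir; rewrite !ffunE ir eqxx.
Qed.

Lemma stepE w' : step R m w w' = if admissible w' then \prod_r edge_weight r w' else 0.
Proof.
rewrite /step (eq_forallb (P2 := fun i => near i (w' i))); last first.
  by move=> i; rewrite /near; case: eqP => [->|]; rewrite ?orbb.
by rewrite /admissible; case: ifP => // _; rewrite big_mkcond.
Qed.

Lemma edge_weight_ge0 r w' : 0 <= edge_weight r w'.
Proof.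
rewrite /edge_weight /edge_prob; case: ifP => // _.
by rewrite divr_ge0 ?addr_ge0 ?mulr_ge0 ?invr_ge0 ?ler0n.
Qed.

Lemma step_ge0 w' : 0 <= step R m w w'.
Proof. by rewrite stepE; case: admissible => //; apply: prodr_ge0 => r _; apply: edge_weight_ge0. Qed.

Lemma edge_weight_local r (w1 w2 : conf) :
  (forall i, edge_of i = r -> w1 i = w2 i) -> edge_weight r w1 = edge_weight r w2.
Proof.
move=> eq12; rewrite /edge_weight; case: ifP => // lr.
suff : sent r w1 = sent r w2 by rewrite /sent /edge_prob /= => ->.
apply: eq_card => i; rewrite !inE; case: (boolP (_ || _)) => //= i_on.
by rewrite eq12 //; apply/eqP; rewrite edge_ofE // inE.
Qed.

Lemma sum_step_prod (Phi : V -> conf -> R) :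
  (forall r (w1 w2 : conf), (forall i, edge_of i = r -> w1 i = w2 i) ->
     Phi r w1 = Phi r w2) ->
  \sum_w' step R m w w' * \prod_r Phi r w' =
  \prod_r \sum_(w' | moves_on r w') edge_weight r w' * Phi r w'.
Proof.
move=> Phi_local.
rewrite (eq_bigr (fun w' => (if admissible w' then \prod_r edge_weight r w' else 0) *
  \prod_r Phi r w')) => [|w' _]; last by rewrite stepE.
rewrite (bigID admissible) /= [X in _ + X]big1 ?addr0 => [|w' /negbTE -> //]; last first.
  by rewrite mul0r.
rewrite -sum_admissible_prod => [|r w1 w2 eq12]; last first.
  by rewrite (edge_weight_local eq12) (Phi_local r w1 w2).
by apply: eq_bigr => w' ->; rewrite -big_split.
Qed.

Lemma sum_moves_on_leads r (H : nat -> R) : leads r ->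
  \sum_(w' | moves_on r w') H (sent r w') =
  \sum_(B : {set Tok} | B \subset edge_tokens r) H #|B|.
Proof.
move=> lr; have mr := negbTE (leads_mate_neq lr); set G := edge_tokens r.
have movesE w' : moves_on r w' =
    [forall i, if i \in G then (w' i == r) || (w' i == m r) else w' i == w i].
  apply: eq_forallb => i; rewrite -edge_ofE //; case: ifP => // ir.
  by move: ir; rewrite edge_ofE // inE /near => /orP[] /eqP -> //; rewrite mK orbC.
rewrite (eq_bigl _ _ movesE).
pose h (B : {set Tok}) : conf :=
  [ffun i => if i \in G then (if i \in B then r else m r) else w i].
pose h' (w' : conf) := [set i in G | w' i == r].
rewrite (reindex_onto h h') => [|w' /forallP on_w']; last first.
  apply/ffunP => i; have := on_w' i; rewrite !ffunE !inE.
  by case: ((w i == r) || (w i == m r)) => [/orP[] /eqP -> | /eqP ->]; rewrite ?eqxx ?mr.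
have h'hE B : h' (h B) = G :&: B.
  apply/setP => i; rewrite !inE ffunE !inE.
  by case: ((w i == r) || (w i == m r)); case: (i \in B); rewrite ?eqxx ?mr.
apply: eq_big => [B | B /andP[_]]; last first.
  rewrite h'hE => /eqP GB; congr H; rewrite -[in RHS]GB -h'hE.
  by apply: eq_card => i; rewrite !inE.
rewrite h'hE; have -> /= : [forall i, if i \in G then (h B i == r) || (h B i == m r)
                                      else h B i == w i].
  by apply/forallP => i; rewrite ffunE; case: (i \in G); case: (i \in B); rewrite ?eqxx ?orbT.
exact/eqP/setIidPr.
Qed.

Lemma sum_edge_leads r (H : nat -> R) : leads r ->
  \sum_(w' | moves_on r w') edge_weight r w' * H (sent r w') =
  (H (uphalf #|edge_tokens r|) + H #|edge_tokens r|./2) / 2.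
Proof.
move=> lr; set x := #|edge_tokens r|.
pose p k : R := (2^-1 * (k == uphalf x)%:R + 2^-1 * (k == x./2)%:R) / 'C(x, k)%:R.
rewrite (eq_bigr (fun w' => p (sent r w') * H (sent r w'))) => [|w' _]; last first.
  by rewrite /edge_weight lr.
rewrite (sum_moves_on_leads (fun k => p k * H k)) // (sum_subsets_card _ (fun k => p k * H k)) -/x.
rewrite (eq_bigr (fun k : 'I_x.+1 => 2^-1 * ((k == uphalf x :> nat)%:R * H k)
                                 + 2^-1 * ((k == x./2 :> nat)%:R * H k))) => [|k _].
  rewrite big_split /= -!mulr_sumr !sum_ord_indicator -?mulrDr 1?mulrC //.
    by rewrite -[leqRHS](uphalf_add_half x) leq_addl.
  by rewrite -[leqRHS](uphalf_add_half x) leq_addr.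
rewrite -[_ *+ 'C(x, k)]mulr_natr mulrAC /p /= divfK ?mulrDl ?mulrA // pnatr_eq0 -lt0n bin_gt0.
by rewrite -ltnS.
Qed.

Lemma sum_edge_not_leads r (Phi : conf -> R) : ~~ leads r ->
  \sum_(w' | moves_on r w') edge_weight r w' * Phi w' = Phi w.
Proof.
move=> nlr; rewrite (big_pred1 w) /edge_weight ?(negbTE nlr) ?mul1r // => w'.
apply/forallP/eqP => [on_w' | -> i]; last by case: ifP; rewrite /near eqxx.
apply/ffunP => i; have := on_w' i; case: ifP => [/eqP ir | _ /eqP //].
by rewrite /near mate_fixed ?ir // orbb => /eqP.
Qed.

Lemma sum_edge_weight r : \sum_(w' | moves_on r w') edge_weight r w' = 1.
Proof.
case: (boolP (leads r)) => lr.
  by have := sum_edge_leads (fun _ => 1) lr; under eq_bigr do rewrite mulr1; rewrite mid_id.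
by have := sum_edge_not_leads (fun _ => 1) lr; under eq_bigr do rewrite mulr1.
Qed.

Lemma card_sent r (w' : conf) : leads r ->
  #|[pred i | (edge_of i == r) && (w' i == r)]| = sent r w'.
Proof. by move=> lr; apply: eq_card => i; rewrite !inE edge_ofE // inE. Qed.

Lemma card_unsent r (w' : conf) : leads r ->
  #|[pred i | (edge_of i == r) && (w' i != r)]| = (#|edge_tokens r| - sent r w')%N.
Proof.
move=> lr; rewrite -(cardID [pred i | w' i == r] (edge_tokens r)).
have -> : #|[predI edge_tokens r & [pred i | w' i == r]]| = sent r w'.
  by apply: eq_card => i; rewrite !inE.
by rewrite addKn; apply: eq_card => i; rewrite !inE edge_ofE // inE andbC.
Qed.

Lemma prod_edge_tokens r (w' : conf) (f : V -> R) : leads r -> moves_on r w' ->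
  \prod_(i | edge_of i == r) f (w' i) =
  f r ^+ sent r w' * f (m r) ^+ (#|edge_tokens r| - sent r w').
Proof.
move=> lr on_w'; rewrite (bigID (fun i => w' i == r)) /=.
rewrite (eq_bigr (fun _ => f r)) => [|i /andP[_ /eqP -> //]].
rewrite [X in _ * X](eq_bigr (fun _ => f (m r))) => [|i /andP[ir w'ir]].
  by rewrite !prodr_const -card_unsent // -card_sent.
by rewrite (moves_on_mate lr on_w' ir w'ir).
Qed.

Lemma sum_edge_tokens r (w' : conf) (g : V -> R) : leads r -> moves_on r w' ->
  \sum_(i | edge_of i == r) g (w' i) =
  g r *+ sent r w' + g (m r) *+ (#|edge_tokens r| - sent r w').
Proof.
move=> lr on_w'; rewrite (bigID (fun i => w' i == r)) /=.
rewrite (eq_bigr (fun _ => g r)) => [|i /andP[_ /eqP -> //]].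
rewrite [X in _ + X](eq_bigr (fun _ => g (m r))) => [|i /andP[ir w'ir]].
  by rewrite !sumr_const -card_unsent // -card_sent.
by rewrite (moves_on_mate lr on_w' ir w'ir).
Qed.

Lemma card_edge_of r : leads r -> #|[pred i | edge_of i == r]| = #|edge_tokens r|.
Proof. by move=> lr; apply: eq_card => i; rewrite -edge_ofE. Qed.

Lemma mate_avg_edge (f : V -> R) r i : leads r -> edge_of i == r ->
  mate_avg m f (w i) = (f r + f (m r)) / 2.
Proof. by move=> lr; rewrite edge_ofE // inE /mate_avg => /orP[] /eqP ->; rewrite ?mK // addrC. Qed.

Lemma mate_avg_fixed (f : V -> R) i : ~~ leads (edge_of i) -> mate_avg m f (w i) = f (w i).
Proof. by move=> nl; rewrite /mate_avg mate_fixed // mid_id. Qed.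

Lemma step_expect_prod_le (f : V -> R) : (forall u, 0 <= f u) ->
  \sum_w' step R m w w' * \prod_i f (w' i) <= \prod_i mate_avg m f (w i).
Proof.
move=> f_ge0.
rewrite (eq_bigr (fun w' => step R m w w' * \prod_r \prod_(i | edge_of i == r) f (w' i)))
  => [|w' _]; last by rewrite (partition_big edge_of predT).
rewrite sum_step_prod => [|r w1 w2 eq12]; last by apply: eq_bigr => i /eqP /eq12 ->.
rewrite (partition_big edge_of predT) //=; apply: ler_prod => r _; apply/andP; split.
  by apply: sumr_ge0 => w' _; rewrite mulr_ge0 ?edge_weight_ge0 ?prodr_ge0.
case: (boolP (leads r)) => lr; last first.
  rewrite sum_edge_not_leads // [leRHS](eq_bigr (fun i => f (w i))) => [|i /eqP ir].
    exact: lexx.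
  by rewrite mate_avg_fixed ?ir.
rewrite (eq_bigr (fun w' => edge_weight r w' *
    (f r ^+ sent r w' * f (m r) ^+ (#|edge_tokens r| - sent r w')))) => [|w' on_w'].
  rewrite (sum_edge_leads (fun k => f r ^+ k * f (m r) ^+ (#|edge_tokens r| - k))) //.
  rewrite (eq_bigr (fun _ => (f r + f (m r)) / 2)) => [|i]; last exact: mate_avg_edge.
  by rewrite prodr_const card_edge_of // mid_split_powers_le.
by rewrite prod_edge_tokens.
Qed.

Lemma step_expect_sum (g : V -> R) :
  \sum_w' step R m w w' * \sum_i g (w' i) = \sum_i mate_avg m g (w i).
Proof.
rewrite (eq_bigr (fun w' => \sum_r step R m w w' * \sum_(i | edge_of i == r) g (w' i)))
  => [|w' _]; last by rewrite (partition_big edge_of predT) // big_distrr.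
rewrite exchange_big (partition_big edge_of predT) //=; apply: eq_bigr => r0 _.
(* Make the summand a product over edges that is trivial away from [r0]. *)
rewrite (eq_bigr (fun w' => step R m w w' *
    \prod_r (if r == r0 then \sum_(i | edge_of i == r) g (w' i) else 1))) => [|w' _].
  rewrite sum_step_prod => [|r w1 w2 eq12]; last first.
    by case: ifP => // _; apply: eq_bigr => i /eqP /eq12 ->.
  rewrite (bigD1 r0) //= eqxx [X in _ * X]big1 ?mulr1 => [|r /negbTE ->]; last first.
    by under eq_bigr do rewrite mulr1; exact: sum_edge_weight.
  case: (boolP (leads r0)) => lr; last first.
    by rewrite sum_edge_not_leads //; apply: eq_bigr => i /eqP ir; rewrite mate_avg_fixed ?ir.
  rewrite (eq_bigr (fun w' => edge_weight r0 w' * (g r0 *+ sent r0 w' +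
      g (m r0) *+ (#|edge_tokens r0| - sent r0 w')))) => [|w' on_w']; last first.
    by rewrite sum_edge_tokens.
  rewrite (sum_edge_leads (fun k => g r0 *+ k + g (m r0) *+ (#|edge_tokens r0| - k))) //.
  rewrite (eq_bigr (fun _ => (g r0 + g (m r0)) / 2)) => [|i]; last exact: mate_avg_edge.
  by rewrite sumr_const card_edge_of // mid_split_sums.
by rewrite -big_mkcond big_pred1_eq.
Qed.
End OneRound.

(* [walk_mean M t1 k f u] is E[f X] for the position X after round [t1 + k] of a
   lone token at [u] after round [t1]; the last round is averaged first. *)
Fixpoint walk_mean (F : fieldType) (V : Type) (M : nat -> V -> V) (t1 k : nat)
    (f : V -> F) : V -> F :=
  if k is k'.+1 then walk_mean M t1 k' (mate_avg (M (t1 + k)%N) f) else f.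

Section WalkMean.
Variables (F : realFieldType) (V : Type) (M : nat -> V -> V) (t1 : nat).

Lemma eq_walk_mean k (f g : V -> F) : f =1 g -> walk_mean M t1 k f =1 walk_mean M t1 k g.
Proof. by elim: k f g => [|k IHk] f g eq_fg u //=; apply: IHk => v; rewrite /mate_avg !eq_fg. Qed.

Lemma walk_mean_affine k (a b : F) (g : V -> F) u :
  walk_mean M t1 k (fun v => a + b * g v) u = a + b * walk_mean M t1 k g u.
Proof.
elim: k g u => [|k IHk] g u //=; rewrite -IHk; apply: eq_walk_mean => v.
by rewrite /mate_avg; field.
Qed.

Lemma walk_mean_ge0 k (f : V -> F) : (forall u, 0 <= f u) -> forall u, 0 <= walk_mean M t1 k f u.
Proof.
elim: k f => [|k IHk] f f_ge0 u //=; apply: IHk => v.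
by rewrite /mate_avg divr_ge0 ?addr_ge0.
Qed.

End WalkMean.

Section Rounds.
Variables (R : realType) (V Tok : finType) (M : nat -> V -> V) (t1 : nat).
Hypothesis MK : forall t, involutive (M t).
Variable w0 : {ffun Tok -> V}.
Local Notation dist := (dist R M t1 w0).

Lemma sum_dist0 (X : {ffun Tok -> V} -> R) : \sum_w dist 0 w * X w = X w0.
Proof.
rewrite /= (bigD1 w0) //= eqxx mul1r big1 ?addr0 // => w /negbTE ->.
by rewrite mul0r.
Qed.

Lemma sum_distS k (X : {ffun Tok -> V} -> R) :
  \sum_w' dist k.+1 w' * X w' =
  \sum_w dist k w * \sum_w' step R (M (t1 + k.+1)%N) w w' * X w'.
Proof.
rewrite /=; under eq_bigr do rewrite big_distrl.
rewrite exchange_big; apply: eq_bigr => w _; rewrite big_distrr.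
by apply: eq_bigr => w' _; rewrite /= mulrA.
Qed.

Lemma dist_ge0 k w : 0 <= dist k w.
Proof.
elim: k w => [|k IHk] w /=; first by case: (w == w0).
by apply: sumr_ge0 => w1 _; rewrite mulr_ge0 ?IHk ?step_ge0.
Qed.

Lemma expect_sum_tokens k (g : V -> R) :
  \sum_w dist k w * \sum_i g (w i) = \sum_i walk_mean M t1 k g (w0 i).
Proof.
elim: k g => [|k IHk] g; first by rewrite sum_dist0.
rewrite sum_distS /= -IHk; apply: eq_bigr => w _.
by rewrite step_expect_sum.
Qed.

Lemma expect_prod_tokens_le k (f : V -> R) : (forall u, 0 <= f u) ->
  \sum_w dist k w * \prod_i f (w i) <= \prod_i walk_mean M t1 k f (w0 i).
Proof.
elim: k f => [|k IHk] f f_ge0; first by rewrite sum_dist0.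
rewrite sum_distS /=; apply: le_trans (IHk _ _) => [|u]; last first.
  by rewrite /mate_avg divr_ge0 ?addr_ge0.
apply: ler_sum => w _; rewrite ler_wpM2l ?dist_ge0 //.
exact: step_expect_prod_le.
Qed.

End Rounds.

Lemma chernoff_upper_tail (R : realType) (T : finType) (p Z : T -> R) (mu delta : R) :
  (forall t, 0 <= p t) -> 0 < delta ->
  \sum_t p t * expR (ln (1 + delta) * Z t) <= expR (delta * mu) ->
  \sum_(t | (1 + delta) * mu <= Z t) p t
    <= powR (expR delta / powR (1 + delta) (1 + delta)) mu.
Proof.
move=> p_ge0 delta_gt0 mgf_le; set lam := ln (1 + delta); set a := (1 + delta) * mu.
have lam_ge0 : 0 <= lam by rewrite ln_ge0 // lerDl ltW.
have markov : \sum_(t | a <= Z t) p t <= expR (- (lam * a)) * \sum_t p t * expR (lam * Z t).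
  rewrite mulr_sumr [leRHS](bigID (fun t => a <= Z t)) /= -[leLHS]addr0 lerD //; last first.
    by apply: sumr_ge0 => t _; rewrite !mulr_ge0 ?expR_ge0 ?p_ge0.
  apply: ler_sum => t a_le_Z; rewrite mulrCA -expRD -[leLHS]mulr1 ler_wpM2l //.
  by apply: le_trans (expR_ge1Dx _); rewrite lerDl; nra.
apply: (le_trans markov); apply: le_trans (ler_wpM2l (expR_ge0 _) mgf_le) _.
have powE : powR (1 + delta) (1 + delta) = expR ((1 + delta) * lam).
  by rewrite /powR gt_eqF //; lra.
rewrite powE -expRB /powR gt_eqF ?expR_gt0 // expRK -expRD.
by rewrite le_eqVlt; apply/orP; left; apply/eqP; congr expR; rewrite /a; ring.
Qed.

Lemma Zcount_sum (R : pzSemiRingType) (V Tok : finType) (D : {set V}) (w : {ffun Tok -> V}) :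
  (Zcount D w)%:R = \sum_i (w i \in D)%:R :> R.
Proof.
rewrite /Zcount -sum1_card natr_sum [LHS]big_mkcond /=.
by apply: eq_bigr => i _; rewrite inE; case: (w i \in D).
Qed.

Lemma expectZ_walk_mean (R : realType) (V Tok : finType) (M : nat -> V -> V) t1
    (w0 : {ffun Tok -> V}) k (D : {set V}) : (forall t, involutive (M t)) ->
  expectZ R M t1 w0 k D = \sum_i walk_mean M t1 k (fun u => (u \in D)%:R) (w0 i).
Proof.
move=> MK; rewrite -expect_sum_tokens //; apply: eq_bigr => w _.
by rewrite Zcount_sum.
Qed.

Lemma expect_exp_Zcount_le (R : realType) (V Tok : finType) (M : nat -> V -> V) t1
    (w0 : {ffun Tok -> V}) k (D : {set V}) (lam : R) : (forall t, involutive (M t)) ->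
  \sum_w dist R M t1 w0 k w * expR (lam * (Zcount D w)%:R)
    <= expR ((expR lam - 1) * expectZ R M t1 w0 k D).
Proof.
move=> MK; pose ind (u : V) : R := (u \in D)%:R.
pose f u := expR (lam * ind u).
have fE : f =1 fun u => 1 + (expR lam - 1) * ind u.
  by move=> u; rewrite /f /ind; case: (u \in D); rewrite ?mulr1 ?mulr0 ?expR0; lra.
have f_ge0 u : 0 <= f u by rewrite expR_ge0.
rewrite (eq_bigr (fun w => dist R M t1 w0 k w * \prod_i f (w i))) => [|w _]; last first.
  by rewrite Zcount_sum mulr_sumr expR_sum.
apply: le_trans (expect_prod_tokens_le t1 MK w0 k f_ge0) _.
rewrite expectZ_walk_mean // mulr_sumr expR_sum; apply: ler_prod => i _.
rewrite walk_mean_ge0 //= (eq_walk_mean M t1 k fE) walk_mean_affine.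
exact: expR_ge1Dx.
Qed.

Theorem lemma3p3 (R : realType) (V Tok : finType) (e : rel V)
  (e_sym : symmetric e) (e_irr : irreflexive e)
  (M : nat -> V -> V) (HM : forall t, is_matching e (M t))
  (t1 t2 : nat) (w0 : {ffun Tok -> V}) (D : {set V})
  (Ht : (t1 < t2)%N) (delta : R) (Hdelta : 0 < delta) :
  let EZ := expectZ R M t1 w0 (t2 - t1) D in
  probZge (R:=R) M t1 w0 (t2 - t1) D ((1 + delta) * EZ)
  <= powR (expR delta / powR (1 + delta) (1 + delta)) EZ.
Proof.
have MK t : involutive (M t) by move=> u; case: (HM t u).
rewrite /=.
apply: (chernoff_upper_tail (Z := fun w => (Zcount D w)%:R)) => //.
  exact: dist_ge0.
have := expect_exp_Zcount_le t1 w0 (t2 - t1) D (ln (1 + delta)) MK.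
by rewrite lnK ?posrE; [rewrite addrAC subrr add0r | lra].
Qed.
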